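(* Let $0<\alpha<\beta<1$ and $\tau=\min(\alpha,1-\beta)$. Let $p^1,\dots,p^m\in[\alpha,\beta]$ and let $v^1,\dots,v^m$ be independent with $v^j\sim D_{p^j}$, where $D_{p}$ denotes a distribution with $\Pr_{v\sim D_p}[v=0]=p$. Set $c^j=1$ if $v^j\neq0$ and $c^j=-1$ if $v^j=0$. Let $a^1,\dots,a^m\in[-1,1]$ be fixed. Then for all $\lambda\ge0$, $$\Pr\left[\sum_{j\in[m]}a^j\phi^{p^j}(c^j)\ge\lambda\right]\le e^{-\lambda^2/4m}+e^{-\sqrt\tau\lambda/4}.$$
   Context: For $p\in(0,1)$, $\phi^p:\{\pm1\}\to\mathbb{R}$ is defined by $\phi^p(1)=-\sqrt{\frac{p}{1-p}}$ and $\phi^p(-1)=\sqrt{\frac{1-p}{p}}$. *)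

From HB Require Import structures.
From mathcomp Require Import all_boot all_order all_algebra.
From mathcomp Require Import all_classical all_reals all_analysis.
Set Implicit Arguments. Unset Strict Implicit. Unset Printing Implicit Defensive.
Import Order.TTheory GRing.Theory Num.Theory.
Local Open Scope classical_set_scope.
Local Open Scope ring_scope.

(* phi^p : {+1,-1} -> R ; the argument x is meant to be 1 or -1 *)
Definition phi {R : realType} (p : R) (x : R) : R :=
  if x == 1 then - Num.sqrt (p / (1 - p)) else Num.sqrt ((1 - p) / p).

Definition csign {R : realType} (v : R) : R := if v != 0 then 1 else -1.

(* mutual independence of a finite family of real random variables:
   product rule for every family of measurable sets (taking B j = setT
   recovers every subfamily) *)
Definition mutually_independent {d} {T : measurableType d} {R : realType}
  (P : probability T R) (m : nat) (v : 'I_m -> T -> R) : Prop :=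
  forall B : 'I_m -> set R, (forall j, measurable (B j)) ->
    P (\bigcap_(j in [set: 'I_m]) (v j @^-1` B j)) =
    (\prod_(j < m) P (v j @^-1` B j))%E.

From HB Require Import structures.
From mathcomp Require Import all_boot all_order all_algebra.
From mathcomp Require Import all_classical all_reals all_analysis.
From mathcomp Require Import ring lra.
Import Order.TTheory GRing.Theory Num.Theory.
Local Open Scope classical_set_scope.
Local Open Scope ring_scope.

(* Write X_j = a_j phi^{p_j}(c_j).  Since c_j = -1 with probability p_j,
   X_j takes two values, has mean 0 and second moment a_j^2 <= 1, and both
   values are at most 1/(2t) in absolute value once 4 t^2 <= tau.  The bound
   exp x <= 1 + x + x^2 on [-1/2, 1/2] then gives E exp(t X_j) <= exp(t^2).
   The event only depends on which v_j vanish, so independence splits it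
   into the 2^m cells of this zero pattern, and Markov's inequality for
   exp(t sum_j X_j) bounds its probability by exp(m t^2 - t lambda).  Taking
   t = lambda/(2m) when it is admissible gives the first term; otherwise
   t = sqrt(tau)/2 and lambda > m sqrt(tau) give the second. *)

Section exponential_bounds.
Variable R : realType.
Implicit Types x y : R.

Lemma expR_mul1B_le1 y : expR y * (1 - y) <= 1.
Proof.
have := expR_ge1Dx (- y); have := expR_gt0 y.
have : expR y * expR (- y) = 1 by rewrite -expRD subrr expR0.
nra.
Qed.

(* Apply [expR_mul1B_le1] to [x / 4] and raise to the fourth power: the
   resulting polynomial inequality holds on [-1/2, 1/2]. *)
Lemma expR_le_quadratic x : `|x| <= 1 / 2 -> expR x <= 1 + x + x ^+ 2.
Proof.
rewrite ler_norml => /andP[xge xle].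
set y := x / 4; have -> : x = 4%:R * y by rewrite /y; field.
have y_ge : - (1 / 8) <= y by rewrite /y; lra.
have y_le : y <= 1 / 8 by rewrite /y; lra.
have lt1y : 0 < 1 - y by lra.
have h4 : expR y ^+ 4 * (1 - y) ^+ 4 <= 1.
  by rewrite -exprMn exprn_ile1 ?expR_mul1B_le1 // mulr_ge0 ?expR_ge0 // ltW.
rewrite expRM_natl -(ler_pM2r (exprn_gt0 4 lt1y)) (le_trans h4) // -subr_ge0.
have -> : (1 + 4%:R * y + (4%:R * y) ^+ 2) * (1 - y) ^+ 4 - 1 =
   y ^+ 2 * ((6%:R - 44%:R * y) + y ^+ 2 * (81%:R - 60%:R * y) + 16%:R * y ^+ 4)
  by ring.
have : 0 <= y ^+ 2 * (81%:R - 60%:R * y) by rewrite mulr_ge0 ?sqr_ge0 //; lra.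
have : 0 <= y ^+ 4 by rewrite exprn_even_ge0.
have := sqr_ge0 y.
nra.
Qed.

Lemma norm_le_half_of_sqr x : x ^+ 2 <= 1 / 4 -> `|x| <= 1 / 2.
Proof. by rewrite -real_normK ?num_real // => ?; have := normr_ge0 x; nra. Qed.

End exponential_bounds.

Lemma two_point_expR_le {R : realType} (p u w t : R) : 0 <= p <= 1 ->
  p * u + (1 - p) * w = 0 -> p * u ^+ 2 + (1 - p) * w ^+ 2 <= 1 ->
  `|t * u| <= 1 / 2 -> `|t * w| <= 1 / 2 ->
  p * expR (t * u) + (1 - p) * expR (t * w) <= expR (t ^+ 2).
Proof.
move=> /andP[p0 p1] mean0 var1 /expR_le_quadratic eu /expR_le_quadratic ew.
apply: le_trans (expR_ge1Dx _).
have -> : 1 + t ^+ 2 = p * (1 + t * u + (t * u) ^+ 2) +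
    (1 - p) * (1 + t * w + (t * w) ^+ 2) +
    t ^+ 2 * (1 - (p * u ^+ 2 + (1 - p) * w ^+ 2)) - t * (p * u + (1 - p) * w)
  by ring.
rewrite mean0 mulr0 subr0 -[leLHS]addr0.
apply: lerD; last by rewrite mulr_ge0 ?sqr_ge0 ?subr_ge0.
by apply: lerD; apply: ler_wpM2l; rewrite ?subr_ge0.
Qed.

Section phi_moments.
Variables (R : realType) (p : R).
Hypotheses (p_gt0 : 0 < p) (p_lt1 : p < 1).

Let q_gt0 : 0 < 1 - p. Proof. by rewrite subr_gt0. Qed.

Lemma phiN1 : phi p (-1) = Num.sqrt ((1 - p) / p).
Proof. by rewrite /phi ifN_eq //; apply/eqP; lra. Qed.

Lemma phi1 : phi p 1 = - Num.sqrt (p / (1 - p)).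
Proof. by rewrite /phi eqxx. Qed.

Lemma phiN1_sqr : phi p (-1) ^+ 2 = (1 - p) / p.
Proof. by rewrite phiN1 sqr_sqrtr // divr_ge0 ?subr_ge0 ?ltW. Qed.

Lemma phi1_sqr : phi p 1 ^+ 2 = p / (1 - p).
Proof. by rewrite phi1 sqrrN sqr_sqrtr // divr_ge0 ?subr_ge0 ?ltW. Qed.

Lemma phi_mean : p * phi p (-1) + (1 - p) * phi p 1 = 0.
Proof.
rewrite phiN1 phi1 mulrN; apply/eqP.
rewrite subr_eq0 -(@eqrXn2 _ 2) ?mulr_ge0 ?sqrtr_ge0 ?ltW //.
rewrite !exprMn !sqr_sqrtr ?divr_ge0 ?ltW //.
by apply/eqP; field; rewrite !gt_eqF.
Qed.

Lemma phi_second_moment : p * phi p (-1) ^+ 2 + (1 - p) * phi p 1 ^+ 2 = 1.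
Proof. by rewrite phiN1_sqr phi1_sqr; field; rewrite !gt_eqF ?subr_gt0. Qed.

Lemma abs_phiN1_le t : 4 * t ^+ 2 <= p -> `|t * phi p (-1)| <= 1 / 2.
Proof.
move=> tp; apply: norm_le_half_of_sqr.
rewrite exprMn phiN1_sqr mulrA ler_pdivrMr //.
by have := sqr_ge0 t; have := q_gt0; nra.
Qed.

Lemma abs_phi1_le t : 4 * t ^+ 2 <= 1 - p -> `|t * phi p 1| <= 1 / 2.
Proof.
move=> tp; apply: norm_le_half_of_sqr.
rewrite exprMn phi1_sqr mulrA ler_pdivrMr //.
by have := sqr_ge0 t; have := p_gt0; nra.
Qed.

Lemma phi_expR_le a t : -1 <= a <= 1 -> 4 * t ^+ 2 <= p -> 4 * t ^+ 2 <= 1 - p ->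
  p * expR (t * (a * phi p (-1))) + (1 - p) * expR (t * (a * phi p 1))
  <= expR (t ^+ 2).
Proof.
move=> /andP[a_ge a_le] tp tq.
have scaled x : `|t * x| <= 1 / 2 -> `|t * (a * x)| <= 1 / 2.
  move=> tx; rewrite mulrCA normrM (le_trans _ tx) // ler_piMl //.
  by rewrite ler_norml a_ge.
apply: two_point_expR_le; rewrite ?scaled ?abs_phiN1_le ?abs_phi1_le //.
- by rewrite !ltW.
- by rewrite mulrCA [(1 - p) * _]mulrCA -mulrDr phi_mean mulr0.
- rewrite !exprMn mulrCA [(1 - p) * _]mulrCA -mulrDr phi_second_moment mulr1.
  by nra.
Qed.

End phi_moments.

(* Markov's inequality for [expR (t * (X - lam))], written out on a finite
   product space with weights [q j b]. *)
Lemma chernoff_sum_prod {R : realType} {m : nat} (q x : 'I_m -> bool -> R)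
    (t lam : R) : (forall j b, 0 <= q j b) -> 0 <= t ->
  \sum_(s : {ffun 'I_m -> bool} | lam <= \sum_(j < m) x j (s j))
     \prod_(j < m) q j (s j)
  <= expR (- (t * lam)) * \prod_(j < m) \sum_(b : bool) q j b * expR (t * x j b).
Proof.
move=> q_ge0 t_ge0.
rewrite bigA_distr_bigA big_distrr big_mkcond /=.
apply: ler_sum => s _.
have -> : expR (- (t * lam)) * \prod_(j < m) (q j (s j) * expR (t * x j (s j))) =
    \prod_(j < m) q j (s j) * expR (t * (\sum_(j < m) x j (s j) - lam)).
  rewrite big_split /= mulrCA -expR_sum -expRD mulrBr big_distrr /=.
  by rewrite [- _ + _]addrC.
have prod_ge0 : 0 <= \prod_(j < m) q j (s j) by apply: prodr_ge0.
case: ifP => [lam_le|_]; last by rewrite mulr_ge0 ?expR_ge0.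
by rewrite ler_peMr // -expR0 ler_expR mulr_ge0 // subr_ge0.
Qed.

(* Optimising [expR (m t^2 - t lam)] over [t] with [4 t^2 <= tau]; for
   [m = 0] the first term is [expR 0 = 1], as [x / 0 = 0]. *)
Lemma chernoff_parameter_exists {R : realType} (m : nat) {tau lam : R} :
  0 < tau -> 0 <= lam ->
  exists2 t, 0 <= t /\ 4 * t ^+ 2 <= tau &
   expR (- (t * lam)) * expR (t ^+ 2) ^+ m <=
     expR (- (lam ^+ 2) / (4 * m%:R)) + expR (- (Num.sqrt tau * lam) / 4).
Proof.
move=> tau_gt0 lam_ge0.
set s := Num.sqrt tau.
have s_gt0 : 0 < s by rewrite sqrtr_gt0.
have s_sqr : s ^+ 2 = tau by rewrite sqr_sqrtr // ltW.
have e1 := expR_ge0 (- (lam ^+ 2) / (4 * m%:R)).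
have e2 := expR_ge0 (- (s * lam) / 4).
case: m e1 => [|n] e1.
  exists 0; first by split; rewrite // expr0n mulr0 ltW.
  by rewrite mul0r oppr0 expR0 mulr1 mulr0 invr0 mulr0 expR0 lerDl.
set M := n.+1%:R.
have M_gt0 : 0 < M by rewrite ltr0n.
have [small|large] := lerP (lam / (2 * M)) (s / 2).
- have t_ge0 : 0 <= lam / (2 * M) by rewrite divr_ge0 // mulr_ge0 // ltW.
  exists (lam / (2 * M)).
    by split=> //; rewrite -s_sqr; move: small t_ge0; set u := lam / _; nra.
  rewrite -expRM_natl -expRD.
  have -> : - (lam / (2 * M) * lam) + M * (lam / (2 * M)) ^+ 2 =
      - lam ^+ 2 / (4 * M) by field; rewrite gt_eqF.
  by rewrite lerDl.
- exists (s / 2); first by split; [rewrite divr_ge0 // ltW | rewrite -s_sqr; lra].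
  apply: (@le_trans _ _ (expR (- (s * lam) / 4))); last by rewrite lerDr.
  rewrite -expRM_natl -expRD ler_expR.
  have : M * s <= lam by move: large; rewrite ltr_pdivlMr; nra.
  nra.
Qed.

Lemma measure_bigsetU_fin {d} {T : measurableType d} {R : realType}
    (mu : {measure set T -> \bar R}) {I : finType} (G : pred I) (F : I -> set T) :
  (forall i, measurable (F i)) -> trivIset setT F ->
  mu (\big[setU/set0]_(i | G i) F i) = (\sum_(i | G i) mu (F i))%E.
Proof.
move=> mF tF.
have enumE (V : Type) (op : SemiGroup.com_law V) (idx : V) (E : I -> V) :
    \big[op/idx]_(i | G i) E i =
    \big[op/idx]_(k < #|@predT I| | G (enum_val k)) E (enum_val k).
  exact: (@big_enum_val_cond V op idx I predT G E).
rewrite !enumE measure_bigsetU_ord_cond // => i j _ _ /(tF _ _ Logic.I Logic.I).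
exact: enum_val_inj.
Qed.

Section zero_patterns.
Context {d : measure_display} {T : measurableType d} {R : realType}.
Context {P : probability T R} {m : nat} {v : 'I_m -> T -> R} {p : 'I_m -> R}.
Hypotheses (mv : forall j, measurable_fun setT (v j))
  (indep : mutually_independent P v)
  (Pv0 : forall j, P (v j @^-1` [set 0]) = (p j)%:E).

Definition zero_pattern (t : T) : {ffun 'I_m -> bool} := [ffun j => v j t == 0].

Let zero_or_not (b : bool) : set R := if b then [set 0] else ~` [set 0].

Let measurable_zero_or_not b : measurable (zero_or_not b).
Proof. by case: b; [|apply: measurableC]; exact: measurable_set1. Qed.

Let measurable_preimage j (B : set R) : measurable B -> measurable (v j @^-1` B).
Proof. by move=> mB; rewrite -[_ @^-1` _]setTI; apply: mv. Qed.

Lemma zero_patternE s :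
  [set t | zero_pattern t = s] = \bigcap_(j in [set: 'I_m]) (v j @^-1` zero_or_not (s j)).
Proof.
apply/seteqP; split => t /=.
- by move=> <- j _; rewrite /zero_or_not ffunE /=; case: eqP.
- move=> ts; apply/ffunP => j; rewrite ffunE.
  by have := ts j I; rewrite /zero_or_not; case: (s j) => /= [->|/eqP/negbTE];
    rewrite ?eqxx.
Qed.

Lemma measurable_zero_pattern s : measurable [set t | zero_pattern t = s].
Proof.
rewrite zero_patternE; apply: fin_bigcap_measurable; first exact: finite_finset.
by move=> j _; exact/measurable_preimage.
Qed.

Lemma prob_zero_pattern s :
  P [set t | zero_pattern t = s] = (\prod_(j < m) if s j then p j else 1 - p j)%:E.
Proof.
rewrite zero_patternE indep // -prodEFin; apply: eq_bigr => j _.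
rewrite /zero_or_not; case: (s j) => //.
rewrite -preimage_setC probability_setC ?Pv0 //.
by apply: measurable_preimage; exact: measurable_set1.
Qed.

Lemma prob_sum_zero_pattern_ge (x : 'I_m -> bool -> R) (lam : R) :
  P [set t | lam <= \sum_(j < m) x j (v j t == 0)] =
  (\sum_(s : {ffun 'I_m -> bool} | lam <= \sum_(j < m) x j (s j))
     \prod_(j < m) if s j then p j else 1 - p j)%:E.
Proof.
have patternE t :
    \sum_(j < m) x j (zero_pattern t j) = \sum_(j < m) x j (v j t == 0).
  by apply: eq_bigr => j _; rewrite ffunE.
have -> : [set t | lam <= \sum_(j < m) x j (v j t == 0)] =
    \big[setU/set0]_(s : {ffun 'I_m -> bool} | lam <= \sum_(j < m) x j (s j))
      [set t | zero_pattern t = s].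
  rewrite -bigcup_seq_cond; apply/seteqP; split => t /=.
  - by move=> lam_le; exists (zero_pattern t); rewrite //= mem_index_enum patternE.
  - by move=> [s /andP[_ lam_le] /= ts]; rewrite -patternE ts.
rewrite measure_bigsetU_fin; last 2 first.
- exact: measurable_zero_pattern.
- by move=> s s' _ _ [t [/= <- <-]].
by rewrite (eq_bigr _ (fun s _ => prob_zero_pattern s)) sumEFin.
Qed.

End zero_patterns.

Theorem mainTheorem10 (R : realType) (alpha beta : R) (m : nat)
  (p a : 'I_m -> R) (d : measure_display) (T : measurableType d)
  (P : probability T R) (v : 'I_m -> T -> R) (lambda : R) :
  0 < alpha -> alpha < beta -> beta < 1 ->
  (forall j, alpha <= p j <= beta) ->
  (forall j, measurable_fun setT (v j)) ->
  mutually_independent P v ->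
  (forall j, P (v j @^-1` [set 0]) = (p j)%:E) ->
  (forall j, -1 <= a j <= 1) ->
  0 <= lambda ->
  (P [set t | (lambda <= \sum_(j < m) a j * phi (p j) (csign (v j t)))%R]
  <= (expR (- (lambda ^+ 2) / (4 * m%:R))
      + expR (- (Num.sqrt (Num.min alpha (1 - beta)) * lambda) / 4))%:E)%E.
Proof.
move=> alpha_gt0 alpha_lt_beta beta_lt1 p_range mv indep Pv0 a_range lambda_ge0.
set tau := Num.min alpha (1 - beta).
have tau_gt0 : 0 < tau by rewrite lt_min alpha_gt0 subr_gt0.
have [tau_le_alpha tau_le_beta] : tau <= alpha /\ tau <= 1 - beta.
  by rewrite !ge_min !lexx orbT.
have [t [t_ge0 t_tau] t_opt] := chernoff_parameter_exists m tau_gt0 lambda_ge0.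
pose x j (b : bool) := a j * phi (p j) (if b then -1 else 1).
have -> : [set s | lambda <= \sum_(j < m) a j * phi (p j) (csign (v j s))] =
    [set s | lambda <= \sum_(j < m) x j (v j s == 0)].
  apply/funext => s /=; rewrite (eq_bigr (fun j => x j (v j s == 0))) // => j _.
  by rewrite /csign /x; case: eqP.
rewrite (prob_sum_zero_pattern_ge mv indep Pv0) lee_fin.
have [p_gt0 p_lt1] : (forall j, 0 < p j) /\ (forall j, p j < 1).
  by split=> j; have := p_range j; lra.
pose q j (b : bool) := if b then p j else 1 - p j.
have q_ge0 j b : 0 <= q j b by case: b; rewrite /q ?subr_ge0 ltW.
apply: le_trans (chernoff_sum_prod q x t lambda q_ge0 t_ge0) (le_trans _ t_opt).
rewrite ler_wpM2l ?expR_ge0 // -[in leRHS](card_ord m) -prodr_const.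
apply: ler_prod => j _; rewrite big_bool /=; apply/andP; split.
  by rewrite addr_ge0 ?mulr_ge0 ?expR_ge0 ?subr_ge0 ?ltW.
by apply: phi_expR_le; rewrite ?a_range //; have := p_range j; lra.
Qed.
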